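(* Let $p$ be a prime and let $a_p$ be a $p$-th Fourier coefficient. Then: (a) $(p+1+a_p)(p+1-a_p)$ is a unit in $\bar{\mathbb Z}$ if and only if $p=2$ and $a_2^2=8$; (b) if $p>3$, then neither $p+1+a_p$ nor $p+1-a_p$ is a unit in $\bar{\mathbb Z}$.
   Context: $\bar{\mathbb Z}$ is the ring of algebraic integers. For a prime $p$, an element $a_p\in\bar{\mathbb Q}$ is called a $p$-th Fourier coefficient if (i) $a_p\in\bar{\mathbb Z}$, (ii) $a_p$ is totally real (its minimal polynomial over $\mathbb Q$ splits over $\mathbb R$), and (iii) $|\sigma(a_p)|\le 2\sqrt p$ for every embedding $\sigma:\mathbb Q(a_p)\hookrightarrow\mathbb R$. *)

From mathcomp Require Import all_boot all_order all_algebra all_field.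
Set Implicit Arguments. Unset Strict Implicit. Unset Printing Implicit Defensive.
Import Order.TTheory GRing.Theory Num.Theory.
Local Open Scope ring_scope.

(* We work in algC, the algebraic closure of Q (a model of \bar Q inside C).
   \bar Z is the subring Aint of algebraic integers. *)

Definition Aint_unit (a : algC) : Prop :=
  a \in Aint /\ exists b : algC, b \in Aint /\ a * b = 1.

Definition totally_real (a : algC) : Prop :=
  forall r : algC, root (minCpoly a) r -> r \is Num.real.

(* Embeddings Q(a) -> C are exactly the
   restrictions of field automorphisms of algC (every embedding extends),
   so condition (iii) is stated over all automorphisms nu of algC. *)
Definition fourier_coeff (p : nat) (a : algC) : Prop :=
  [/\ a \in Aint,
      totally_real a &
      forall nu : {rmorphism algC -> algC}, `|nu a| <= 2 * sqrtC p%:R].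

(* A unit of the algebraic integers has a conjugate of absolute value at most
   1: the conjugates of its inverse multiply, up to sign, to the constant term
   of its minimal polynomial, a nonzero rational integer, so one of them has
   absolute value at least 1.  But if every conjugate t of a_p is real with
   |t| <= 2 sqrt p, every conjugate of p + 1 +- a_p has absolute value at least
   p + 1 - 2 sqrt p = (sqrt p - 1)^2 > 1 once p > 4, and every conjugate of
   (p + 1)^2 - a_p^2 is at least (p + 1)^2 - 4p = (p - 1)^2, which is at most 1
   only when p = 2, and then only if a_2^2 = 8. *)

From mathcomp Require Import all_boot all_order all_algebra all_field.
From mathcomp Require Import ring.
Set Implicit Arguments. Unset Strict Implicit. Unset Printing Implicit Defensive.
Import Order.TTheory GRing.Theory Num.Theory.
Local Open Scope ring_scope.

Lemma splittingFieldFor_minPoly_root_aut (F : fieldType) (L : fieldExtType F)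
    (K : {subfield L}) (p : {poly L}) (x y : L) :
    p \is a polyOver K -> splittingFieldFor K p fullv ->
    root (minPoly K x) y ->
  exists g : 'AEnd(L), g x = y.
Proof.
move=> Kp splitKp Kx_y.
have homK1 := kHom1 K K.
have Kx_y1 : root (map_poly \1%VF (minPoly K x)) y by rewrite lfun1_poly.
have sKKx := subv_adjoin K x.
have [f homKf Df] := kHom_extends sKKx (kHomExtendP (subvv K) homK1 Kx_y1) Kp
  (splittingFieldForS sKKx (subvf _) splitKp).
have ahom_f : ahom_in fullv f by apply/ahomP_tmp/kHom_monoid_morphism/(kHomSl (sub1v K)).
exists (AHom ahom_f) => /=.
by rewrite -Df ?memv_adjoin // (kHomExtend_val homK1).
Qed.

Lemma minCpoly_root_aut (x y : algC) :
  root (minCpoly x) y -> exists nu : {rmorphism algC -> algC}, nu x = y.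
Proof.
move=> px_y.
have [p [Dp _] min_p] := minCpolyP x.
have [r Dr] := closed_field_poly_normal (minCpoly x).
rewrite (monicP (minCpoly_monic x)) scale1r in Dr.
have [Qr [QrC [rr Drr genQr]]] := num_field_exists r.
pose pr := map_poly (in_alg Qr) p.
have QrC_pr (q : {poly rat}) : map_poly QrC (map_poly (in_alg Qr) q) = map_poly ratr q.
  rewrite -map_poly_comp; apply: eq_map_poly => c.
  by rewrite /= rmorphZ_num rmorph1 mulr1.
have Qpr : pr \is a polyOver 1%VS.
  by apply/polyOverP => i; rewrite coef_map rpredZ ?memv_line.
have splitQr : splittingFieldFor 1 pr fullv.
  exists rr => //; congr (_ %= _): (eqpxx pr); apply/(map_poly_inj QrC).
  rewrite QrC_pr -Dp Dr -Drr big_map rmorph_prod /=; apply: eq_bigr => zz _.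
  by rewrite map_polyXsubC.
have /mapP[xx _ Dx] : x \in map QrC rr by rewrite Drr -root_prod_XsubC -Dr root_minCpoly.
have /mapP[yy _ Dy] : y \in map QrC rr by rewrite Drr -root_prod_XsubC -Dr.
have pr_yy : root pr yy by rewrite -(fmorph_root QrC) QrC_pr -Dp -Dy.
have min_xx_yy : root (minPoly 1 xx) yy.
  have [q Dq] := polyOver1P (minPolyOver 1 xx).
  have p_dv_q : p %| q by rewrite -min_p Dx -QrC_pr fmorph_root -Dq root_minPoly.
  by apply: root_dvdp pr_yy; rewrite Dq dvdp_map.
have [g gxx] := splittingFieldFor_minPoly_root_aut Qpr splitQr min_xx_yy.
have [nu QrC_g] := extend_algC_subfield_aut QrC g.
by exists nu; rewrite Dx Dy -gxx QrC_g.
Qed.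

Lemma totally_real_aut (a : algC) (nu : {rmorphism algC -> algC}) :
  totally_real a -> nu a \is Num.real.
Proof. by apply; rewrite -(minCpoly_aut nu) root_minCpoly. Qed.

Lemma prodr_norm_lt1 (R : numDomainType) (s : seq R) :
  s != [::] -> {in s, forall z, `|z| < 1} -> \prod_(z <- s) `|z| < 1.
Proof.
elim: s => [//|z s IHs] _ s_lt1; rewrite big_cons.
have z_lt1 := s_lt1 z (mem_head z s).
have [-> | nz_s] := eqVneq s [::]; first by rewrite big_nil mulr1.
rewrite mulr_ilt1 ?prodr_ge0 ?IHs // => y sy.
by apply: s_lt1; rewrite in_cons sy orbT.
Qed.

Lemma Aint_neq0_aut_norm_ge1 (b : algC) :
  b \in Aint -> b != 0 -> exists nu : {rmorphism algC -> algC}, 1 <= `|nu b|.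
Proof.
move=> Ab nz_b.
have [r Dr] := closed_field_poly_normal (minCpoly b).
rewrite (monicP (minCpoly_monic b)) scale1r in Dr.
have [/hasP[z rz z_ge1] | /hasPn r_lt1] := boolP (has (fun z => 1 <= `|z|) r).
  have : root (minCpoly b) z by rewrite Dr root_prod_XsubC.
  by case/minCpoly_root_aut => nu nu_b; exists nu; rewrite nu_b.
have c0_int : (minCpoly b)`_0 \is a Num.int by move: Ab; rewrite unfold_in => /polyOverP.
have nz_c0 : (minCpoly b)`_0 != 0.
  apply: contra nz_b => /eqP c0.
  have /minCpoly_root_aut[nu /eqP] : root (minCpoly b) 0 by rewrite /root horner_coef0 c0.
  by rewrite fmorph_eq0.
have nz_r : r != [::].
  by apply: contraTneq (size_minCpoly b); rewrite Dr => ->; rewrite big_nil size_poly1.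
have prod_lt1 : \prod_(z <- r) `|z| < 1.
  apply: prodr_norm_lt1 => // z /r_lt1.
  by rewrite -real_ltNge ?realE ?normr_ge0 ?ler01.
have := norm_intr_ge1 c0_int nz_c0.
rewrite -horner_coef0 Dr horner_prod normr_prod.
under eq_bigr do rewrite hornerXsubC sub0r normrN.
by rewrite (lt_geF prod_lt1).
Qed.

Lemma Aint_unit_aut_norm_le1 (x : algC) :
  Aint_unit x -> exists nu : {rmorphism algC -> algC}, `|nu x| <= 1.
Proof.
case=> _ [b [Ab xb1]].
have nz_b : b != 0 by apply: contra_eq_neq xb1 => ->; rewrite mulr0 eq_sym oner_neq0.
have [nu nu_b_ge1] := Aint_neq0_aut_norm_ge1 Ab nz_b.
exists nu; apply: le_trans (ler_peMr _ nu_b_ge1) _; rewrite ?normr_ge0 //.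
by rewrite -normrM -rmorphM xb1 rmorph1 normr1.
Qed.

Lemma norm_le_2sqrt_sqr (p : nat) (t : algC) :
  `|t| <= 2 * sqrtC p%:R -> `|t| ^+ 2 <= 4 * p%:R.
Proof.
move=> t_le; have -> : 4 * p%:R = (2 * sqrtC p%:R) ^+ 2 :> algC.
  by rewrite exprMn sqrtCK -natrX.
by rewrite ler_pXn2r ?nnegrE ?mulr_ge0 ?sqrtC_ge0 ?ler0n.
Qed.

Lemma norm_shift_gt1 (p : nat) (t : algC) :
  (4 < p)%N -> `|t| <= 2 * sqrtC p%:R -> 1 < `|p%:R + 1 + t|.
Proof.
move=> p_gt4 t_le; set s := sqrtC p%:R in t_le *.
have s_ge0 : 0 <= s by rewrite sqrtC_ge0 ler0n.
have s_gt2 : 2 < s.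
  by rewrite -(ltr_pXn2r (n := 2)) ?nnegrE ?ler0n // sqrtCK -natrX ltr_nat.
have sqr_gt1 : 1 < (s - 1) ^+ 2.
  by rewrite exprn_egt1 // ltrBrDr.
apply: (lt_le_trans sqr_gt1); apply: le_trans (lerB_normD _ _).
rewrite ger0_norm ?addr_ge0 ?ler0n // -[p%:R](sqrtCK p%:R) -/s.
by rewrite sqrrB1 addrAC lerD2l lerN2 -mulr_natl.
Qed.

Lemma shift_prod_norm_le1 (p : nat) (t : algC) :
    (1 < p)%N -> t \is Num.real -> `|t| <= 2 * sqrtC p%:R ->
    `|(p%:R + 1 + t) * (p%:R + 1 - t)| <= 1 ->
  p = 2%N /\ t ^+ 2 = 8.
Proof.
case: p => [|[|q]] // _ t_real /norm_le_2sqrt_sqr.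
rewrite real_normK // -subr_ge0; set d := _ - t ^+ 2 => d_ge0.
have -> : (q.+2%:R + 1 + t) * (q.+2%:R + 1 - t) = (q.+1 ^ 2)%:R + d.
  by rewrite /d natrX; ring.
rewrite ger0_norm => [le1|]; last by rewrite addr_ge0 ?ler0n.
have q0 : q = 0%N.
  have : (q.+1 ^ 2)%:R <= 1 :> algC by apply: le_trans le1; rewrite lerDl.
  by rewrite lern1; case: q {d d_ge0 le1}.
have d0 : d = 0.
  by apply/le_anti; move: le1; rewrite d_ge0 q0 -[X in _ <= X]addr0 lerD2l => ->.
by move/eqP: d0; rewrite /d q0 subr_eq0 -natrM => /eqP <-.
Qed.

Theorem lemma2p3 (p : nat) (a : algC) :
  prime p -> fourier_coeff p a ->
  (Aint_unit ((p%:R + 1 + a) * (p%:R + 1 - a)) <-> (p = 2%N /\ a ^+ 2 = 8))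
  /\ ((3 < p)%N ->
      ~ Aint_unit (p%:R + 1 + a) /\ ~ Aint_unit (p%:R + 1 - a)).
Proof.
move=> p_pr [_ real_a a_le].
split; last first.
  move=> p_gt3; have p_gt4 : (4 < p)%N.
    by rewrite ltn_neqAle p_gt3 andbT; apply: contraTneq p_pr => <-.
  split=> /Aint_unit_aut_norm_le1[nu]; rewrite ?rmorphB !rmorphD rmorph1 rmorph_nat.
    by rewrite lt_geF // norm_shift_gt1.
  by rewrite lt_geF // norm_shift_gt1 // normrN.
split=> [/Aint_unit_aut_norm_le1[nu] | [-> a2_8]].
  rewrite rmorphM rmorphB !rmorphD rmorph1 rmorph_nat.
  case/(shift_prod_norm_le1 (prime_gt1 p_pr) (totally_real_aut nu real_a) (a_le nu)).
  by move=> -> nu_a2; split=> //; apply: (fmorph_inj nu); rewrite rmorphXn nu_a2 rmorph_nat.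
have -> : (2%:R + 1 + a) * (2%:R + 1 - a) = 1 + (8 - a ^+ 2) :> algC by ring.
rewrite a2_8 subrr addr0.
by split; [exact: Aint1 | exists 1; rewrite Aint1 mulr1].
Qed.
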